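(* Assume $\epsilon\in[0,1/2)$ and the inlier stability condition. Then for every center $\hat\mu\in\mathbb R^p$ and every $w\in\Delta_{N,\epsilon}$, $$\Big\|\sum_{n=1}^Nw_ng_n-\mu_g\Big\|_2\le\delta_\mu+\alpha_\epsilon\sqrt{\gamma(w;\hat\mu)},\qquad \alpha_\epsilon=\sqrt{\frac{\epsilon}{1-2\epsilon}}.$$ In particular $\alpha_\epsilon<1$ whenever $\epsilon<1/3$.
   Context: Fix $N\ge1$, $p\ge1$, $\epsilon\in[0,1)$ and vectors $g_1,\dots,g_N\in\mathbb R^p$. For an index set $I$ and $\epsilon'\in[0,1)$, $\Delta_{I,\epsilon'}=\{w\in\mathbb R^{I}:\sum_{n\in I}w_n=1,\ 0\le w_n\le\frac1{(1-\epsilon')|I|}\}$, and $\Delta_{N,\epsilon}=\Delta_{[N],\epsilon}$. For $\hat\mu\in\mathbb R^p$, $S(w;\hat\mu)=\sum_n w_n(g_n-\hat\mu)(g_n-\hat\mu)^\top$ and $\gamma(w;\hat\mu)=\|S(w;\hat\mu)\|_{op}$ (largest eigenvalue). Inlier stability condition: there is a partition $[N]=I_{in}\sqcup I_{out}$ with $|I_{out}|\le\epsilon N$, a vector $\mu_g\in\mathbb R^p$, a symmetric PSD matrix $\Sigma_g$ and constants $\delta_\mu,\delta_\Sigma\ge0$ such that for every $w\in\Delta_{I_{in},\epsilon/(1-\epsilon)}$: $\|\sum_{n\in I_{in}}w_n(g_n-\mu_g)\|_2\le\delta_\mu$ and $\sum_{n\in I_{in}}w_n(g_n-\mu_g)(g_n-\mu_g)^\top\preceq\Sigma_g+\delta_\Sigma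 I_p$. *)

From HB Require Import structures.
From mathcomp Require Import all_boot all_order all_algebra.
From mathcomp Require Import classical_sets reals.
Set Implicit Arguments. Unset Strict Implicit. Unset Printing Implicit Defensive.
Import Order.TTheory GRing.Theory Num.Theory.
Local Open Scope ring_scope.

Definition norm2 {R : realType} {p : nat} (v : 'cV[R]_p) : R :=
  Num.sqrt (\sum_(i < p) v i 0 ^+ 2).

Definition qform {R : realType} {p : nat} (A : 'M[R]_p) (v : 'cV[R]_p) : R :=
  (v^T *m A *m v) 0 0.

Definition opnorm {R : realType} {p : nat} (A : 'M[R]_p) : R :=
  sup [set x : R | exists v : 'cV[R]_p, norm2 v = 1 /\ x = norm2 (A *m v)].

Definition loewner_le {R : realType} {p : nat} (A B : 'M[R]_p) : Prop :=
  forall v : 'cV[R]_p, qform A v <= qform B v.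
Definition psd {R : realType} {p : nat} (A : 'M[R]_p) : Prop :=
  A^T = A /\ forall v : 'cV[R]_p, 0 <= qform A v.

(* Delta_{I,eps'} : weights w on I (values outside I are irrelevant). *)
Definition in_Delta {R : realType} {N : nat} (I : {set 'I_N}) (eps : R)
  (w : 'I_N -> R) : Prop :=
  \sum_(n in I) w n = 1 /\
  forall n, n \in I -> 0 <= w n /\ w n <= 1 / ((1 - eps) * #|I|%:R).

Definition Smat {R : realType} {N p : nat} (g : 'I_N -> 'cV[R]_p)
  (w : 'I_N -> R) (muhat : 'cV[R]_p) : 'M[R]_p :=
  \sum_(n < N) w n *: ((g n - muhat) *m (g n - muhat)^T).

Definition gamma {R : realType} {N p : nat} (g : 'I_N -> 'cV[R]_p)
  (w : 'I_N -> R) (muhat : 'cV[R]_p) : R := opnorm (Smat g w muhat).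

Definition inlier_stable {R : realType} {N p : nat} (eps : R)
  (g : 'I_N -> 'cV[R]_p) (Iin : {set 'I_N}) (mu_g : 'cV[R]_p)
  (Sigma_g : 'M[R]_p) (delta_mu delta_Sigma : R) : Prop :=
  [/\ #|~: Iin|%:R <= eps * N%:R, psd Sigma_g, 0 <= delta_mu, 0 <= delta_Sigma &
   forall w : 'I_N -> R, in_Delta Iin (eps / (1 - eps)) w ->
     norm2 (\sum_(n in Iin) w n *: (g n - mu_g)) <= delta_mu /\
     loewner_le (\sum_(n in Iin) w n *: ((g n - mu_g) *m (g n - mu_g)^T))
                (Sigma_g + delta_Sigma%:M)].

Definition alpha {R : realType} (eps : R) : R := Num.sqrt (eps / (1 - 2 * eps)).

(* Project onto the unit direction [v] of the error [d = sum_n w_n g_n - mu_g], so that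
   everything becomes one-dimensional with [y_n = <v, g_n>].  The outliers carry mass
   [W' = 1 - W <= eps / (1 - eps)], so [w] renormalised to the inliers is admissible in the
   stability condition and the inlier mean of [y] is within [delta_mu] of [<v, mu_g>].
   What remains of [<v, d>] is the between-group term [(W B - W' A) / W] (with [A], [B] the
   inlier and outlier parts of [sum_n w_n y_n]), and Cauchy-Schwarz within each group bounds
   [(W B - W' A)^2] by [W W' sum_n w_n (y_n - <v, muhat>)^2 <= W W' gamma(w; muhat)].
   Finally [W' / W <= eps / (1 - 2 eps)]. *)

From HB Require Import structures.
From mathcomp Require Import all_boot all_order all_algebra.
From mathcomp Require Import classical_sets reals.
From mathcomp Require Import ring lra.
Import Order.TTheory GRing.Theory Num.Theory.
Local Open Scope ring_scope.
Set Implicit Arguments. Unset Strict Implicit.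

Lemma big_setC (V : nmodType) (I : finType) (J : {set I}) (F : I -> V) :
  \sum_i F i = \sum_(i in J) F i + \sum_(i in ~: J) F i.
Proof.
by rewrite (bigID (mem J)) /=; congr (_ + _); apply: eq_bigl => i; rewrite !inE.
Qed.

Section WeightedSums.
Variables (R : realFieldType) (I : finType) (w : I -> R).
Hypothesis w_ge0 : forall i, 0 <= w i.

Lemma weighted_sum_sqr_le (J : {set I}) (z : I -> R) :
  (\sum_(i in J) w i * z i) ^+ 2
    <= (\sum_(i in J) w i) * \sum_(i in J) w i * z i ^+ 2.
Proof.
set W := \sum_(i in J) w i; set S := \sum_(i in J) w i * z i.
set Q := \sum_(i in J) w i * z i ^+ 2.
have W0 : 0 <= W by apply: sumr_ge0.
have [W_eq0|W_neq0] := eqVneq W 0.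
  have -> : S = 0 by rewrite /S big1 // => i Ji; rewrite (psumr_eq0P _ W_eq0) ?mul0r.
  by rewrite W_eq0 expr0n /= mul0r.
(* the variance of [z] around its weighted mean [t] is nonnegative *)
set t := S / W.
have var_ge0 : 0 <= \sum_(i in J) w i * (z i - t) ^+ 2.
  by apply: sumr_ge0 => i _; rewrite mulr_ge0 ?sqr_ge0.
have var_eq : \sum_(i in J) w i * (z i - t) ^+ 2 = Q - S ^+ 2 / W.
  transitivity (\sum_(i in J) (w i * z i ^+ 2 - (2 * t) * (w i * z i) + t ^+ 2 * w i)).
    by apply: eq_bigr => i _; ring.
  by rewrite big_split /= sumrB -!mulr_sumr -/W -/S -/Q /t; field.
by rewrite var_eq subr_ge0 ler_pdivrMr ?lt0r ?W_neq0 // mulrC in var_ge0.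
Qed.

Lemma between_groups_sqr_le (J : {set I}) (y : I -> R) (c : R) :
  let W := \sum_(i in J) w i in let W' := \sum_(i in ~: J) w i in
  (W * \sum_(i in ~: J) w i * y i - W' * \sum_(i in J) w i * y i) ^+ 2
    <= (W + W') * (W * W') * \sum_i w i * (y i - c) ^+ 2.
Proof.
rewrite /=; set W := \sum_(i in J) w i; set W' := \sum_(i in ~: J) w i.
have centered (K : {set I}) : \sum_(i in K) w i * y i - (\sum_(i in K) w i) * c
    = \sum_(i in K) w i * (y i - c).
  by rewrite mulr_suml -sumrB; apply: eq_bigr => i _; ring.
have -> : W * \sum_(i in ~: J) w i * y i - W' * \sum_(i in J) w i * y i
    = W * \sum_(i in ~: J) w i * (y i - c) - W' * \sum_(i in J) w i * (y i - c).
  by rewrite -!centered -/W -/W'; ring.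
set s := \sum_(i in J) w i * (y i - c); set u := \sum_(i in ~: J) w i * (y i - c).
have W0 : 0 <= W by apply: sumr_ge0.
have W'0 : 0 <= W' by apply: sumr_ge0.
have s2 := weighted_sum_sqr_le J (fun i => y i - c); rewrite -/s -/W in s2.
have u2 := weighted_sum_sqr_le (~: J) (fun i => y i - c); rewrite -/u -/W' in u2.
have two_point : (W * u - W' * s) ^+ 2 <= (W + W') * (W * u ^+ 2 + W' * s ^+ 2).
  rewrite -subr_ge0.
  have -> : (W + W') * (W * u ^+ 2 + W' * s ^+ 2) - (W * u - W' * s) ^+ 2
            = W * W' * (u + s) ^+ 2 by ring.
  by apply: mulr_ge0; [exact: mulr_ge0 | exact: sqr_ge0].
apply: le_trans two_point _; rewrite (big_setC J) -mulrA ler_wpM2l ?addr_ge0 //.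
nra.
Qed.

End WeightedSums.

Section DotProduct.
Variables (R : realType) (p : nat).
Implicit Types (u x y : 'cV[R]_p) (A : 'M[R]_p).

Definition dot u x : R := (u^T *m x) 0 0.

Lemma dotE u x : dot u x = \sum_i u i 0 * x i 0.
Proof. by rewrite /dot !mxE; apply: eq_bigr => i _; rewrite mxE. Qed.

Lemma dotC u x : dot u x = dot x u.
Proof. by rewrite !dotE; apply: eq_bigr => i _; rewrite mulrC. Qed.

Lemma dotBr u x y : dot u (x - y) = dot u x - dot u y.
Proof. by rewrite /dot mulmxBr !mxE. Qed.

Lemma dotBl u x y : dot (x - y) u = dot x u - dot y u.
Proof. by rewrite !(dotC _ u) dotBr. Qed.

Lemma dotZr u x c : dot u (c *: x) = c * dot u x.
Proof. by rewrite /dot -scalemxAr mxE. Qed.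

Lemma dotZl u x c : dot (c *: u) x = c * dot u x.
Proof. by rewrite dotC dotZr dotC. Qed.

Lemma dot_sumr (I : finType) (P : pred I) u (F : I -> 'cV[R]_p) :
  dot u (\sum_(n | P n) F n) = \sum_(n | P n) dot u (F n).
Proof. by rewrite /dot mulmx_sumr summxE. Qed.

Lemma dotxx_ge0 x : 0 <= dot x x.
Proof. by rewrite dotE; apply: sumr_ge0 => i _; rewrite -expr2 sqr_ge0. Qed.

Lemma norm2E x : norm2 x = Num.sqrt (dot x x).
Proof. by rewrite /norm2 dotE; congr Num.sqrt; apply: eq_bigr => i _; rewrite expr2. Qed.

Lemma norm2_sqr x : norm2 x ^+ 2 = dot x x.
Proof. by rewrite norm2E sqr_sqrtr ?dotxx_ge0. Qed.

Lemma norm2Z c x : norm2 (c *: x) = `|c| * norm2 x.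
Proof. by rewrite !norm2E dotZr dotZl mulrA -expr2 sqrtrM ?sqr_ge0 // sqrtr_sqr. Qed.

Lemma abs_coord_le_norm2 x i : `|x i 0| <= norm2 x.
Proof.
rewrite -sqrtr_sqr /norm2 ler_sqrt ?sumr_ge0 // => [|j _]; last exact: sqr_ge0.
by rewrite (bigD1 i) //= lerDl sumr_ge0 // => j _; rewrite sqr_ge0.
Qed.

(* Cauchy-Schwarz against a unit vector, from [0 <= |x - (u.x) u|^2 = |x|^2 - (u.x)^2]. *)
Lemma dot_unit_le_norm2 u x : norm2 u = 1 -> dot u x <= norm2 x.
Proof.
move=> u1; have uu : dot u u = 1 by rewrite -norm2_sqr u1 expr1n.
set s := dot u x.
have : 0 <= dot (x - s *: u) (x - s *: u) by apply: dotxx_ge0.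
have -> : dot (x - s *: u) (x - s *: u) = dot x x - s ^+ 2.
  by rewrite dotBr !dotBl !dotZr !dotZl uu (dotC x u) -/s; ring.
rewrite subr_ge0 => s2_le; rewrite norm2E (le_trans (ler_norm s)) //.
by rewrite -sqrtr_sqr ler_sqrt ?dotxx_ge0.
Qed.

Lemma exists_unit_dot_norm2 x : (0 < p)%N -> exists2 u, norm2 u = 1 & dot u x = norm2 x.
Proof.
move=> p_gt0; have [->|x_neq0] := eqVneq x 0.
  pose e : 'cV[R]_p := \col_i (i == Ordinal p_gt0)%:R.
  exists e; last by rewrite /dot mulmx0 mxE norm2E /dot mulmx0 mxE sqrtr0.
  rewrite /norm2 (bigD1 (Ordinal p_gt0)) //= big1 ?addr0 => [|i /negPf Ni].
    by rewrite mxE eqxx expr1n sqrtr1.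
  by rewrite mxE Ni expr0n.
have nx_gt0 : 0 < norm2 x.
  rewrite lt0r norm2E sqrtr_ge0 andbT -norm2E; apply: contra x_neq0 => /eqP nx0.
  apply/eqP/matrixP => i j; rewrite ord1 mxE; apply/normr0_eq0/eqP.
  by rewrite eq_le normr_ge0 andbT -nx0 abs_coord_le_norm2.
exists ((norm2 x)^-1 *: x).
  by rewrite norm2Z ger0_norm ?invr_ge0 ?ltW // mulVf // gt_eqF.
by rewrite dotZl -norm2_sqr expr2 mulKf // gt_eqF.
Qed.

Lemma qform_dot A x : qform A x = dot x (A *m x).
Proof. by rewrite /qform /dot -mulmxA. Qed.

Lemma qform_outer x y : qform (x *m x^T) y = dot y x ^+ 2.
Proof.
rewrite qform_dot /dot -mulmxA mulmxA mxE big_ord1 expr2; congr (_ * _).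
by rewrite -/(dot x y) dotC.
Qed.

Lemma qform_sum (I : finType) (P : pred I) (w : I -> R) (M : I -> 'M[R]_p) x :
  qform (\sum_(n | P n) w n *: M n) x = \sum_(n | P n) w n * qform (M n) x.
Proof.
rewrite qform_dot mulmx_suml dot_sumr; apply: eq_bigr => n _.
by rewrite -scalemxAl dotZr qform_dot.
Qed.

(* Each entry of [A *m u] is bounded by the l1-norm of the corresponding row of [A],
   since the entries of a unit vector are at most 1 in absolute value. *)
Lemma opnorm_set_bounded A :
  has_ubound [set r : R | exists u, norm2 u = 1 /\ r = norm2 (A *m u)].
Proof.
exists (Num.sqrt (\sum_i (\sum_j `|A i j|) ^+ 2)) => _ [u [u1 ->]].
rewrite /norm2 ler_sqrt ?sumr_ge0 // => [|i _]; last exact: sqr_ge0.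
apply: ler_sum => i _; rewrite -real_normK ?num_real // ler_pXn2r ?nnegrE ?sumr_ge0 //.
rewrite mxE (le_trans (ler_norm_sum _ _ _)) // ler_sum // => j _.
by rewrite normrM ler_piMr // -u1 abs_coord_le_norm2.
Qed.

Lemma qform_le_opnorm A u : norm2 u = 1 -> qform A u <= opnorm A.
Proof.
move=> u1; rewrite qform_dot (le_trans (dot_unit_le_norm2 (A *m u) u1)) //.
by apply: (ub_le_sup (opnorm_set_bounded A)); exists u.
Qed.

Lemma dot_centered_mean (I : finType) (J : {set I}) (w : I -> R)
    (x : I -> 'cV[R]_p) u mu :
  \sum_(i in J) w i = 1 ->
  dot u (\sum_(i in J) w i *: (x i - mu)) = \sum_(i in J) w i * dot u (x i) - dot u mu.
Proof.
move=> w1; rewrite dot_sumr; under eq_bigr do rewrite dotZr dotBr mulrBr.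
by rewrite sumrB -mulr_suml w1 mul1r.
Qed.

Lemma projected_var_le_gamma (N : nat) (g : 'I_N -> 'cV[R]_p) (w : 'I_N -> R) muhat u :
  norm2 u = 1 -> \sum_n w n * (dot u (g n) - dot u muhat) ^+ 2 <= gamma g w muhat.
Proof.
move=> u1; apply: le_trans (qform_le_opnorm _ u1); rewrite /Smat qform_sum.
by apply: ler_sum => n _; rewrite qform_outer dotBr.
Qed.

End DotProduct.

Section Simplex.
Variables (R : realType) (N : nat).
Implicit Types (I J : {set 'I_N}) (eps : R) (w : 'I_N -> R).

Lemma in_DeltaT_simplex eps w :
  in_Delta [set: 'I_N] eps w -> (forall n, 0 <= w n) /\ \sum_n w n = 1.
Proof.
move=> [w1 wb]; split; first by move=> n; case: (wb n (finset.in_setT n)).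
by rewrite -w1; apply: eq_bigl => n; rewrite inE.
Qed.

Lemma in_Delta_mass_le I J eps w : in_Delta I eps w -> J \subset I ->
  \sum_(n in J) w n <= #|J|%:R / ((1 - eps) * #|I|%:R).
Proof.
move=> [_ wb] /fintype.subsetP JI; rewrite -sumr_const mulr_suml.
by apply: ler_sum => n /JI /wb [_]; rewrite mul1r.
Qed.

Lemma outlier_mass_le (I : {set 'I_N}) eps w : (0 < N)%N -> eps < 1 ->
  in_Delta [set: 'I_N] eps w ->
  (\sum_(n in ~: I) w n) * ((1 - eps) * N%:R) <= #|~: I|%:R.
Proof.
move=> N_gt0 eps_lt1 Dw; have := in_Delta_mass_le Dw (finset.subsetT (~: I)).
by rewrite cardsT card_ord ler_pdivlMr // mulr_gt0 ?ltr0n // subr_gt0.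
Qed.

Lemma outlier_mass_eps (I : {set 'I_N}) eps w : (0 < N)%N -> eps < 1 ->
  #|~: I|%:R <= eps * N%:R -> in_Delta [set: 'I_N] eps w ->
  (1 - eps) * \sum_(n in ~: I) w n <= eps.
Proof.
move=> N_gt0 eps_lt1 few_outliers /(outlier_mass_le I N_gt0 eps_lt1) Wout_le.
rewrite -(ler_pM2r (_ : 0 < N%:R)) ?ltr0n //; lra.
Qed.

(* Removing the outliers' mass (at most [|I_out| / ((1 - eps) N)]) leaves enough mass on [I]
   for the renormalised weights to stay below the cap of [Delta_{I, eps / (1 - eps)}],
   because [|I| >= (1 - eps) N]. *)
Lemma in_Delta_rescale (I : {set 'I_N}) eps w : (0 < N)%N -> 0 <= eps -> eps < 1 / 2 ->
  #|~: I|%:R <= eps * N%:R -> in_Delta [set: 'I_N] eps w ->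
  in_Delta I (eps / (1 - eps)) (fun n => w n / \sum_(m in I) w m).
Proof.
move=> N_gt0 eps_ge0 eps_lt_half few_outliers Dw.
have [w_ge0 w1] := in_DeltaT_simplex Dw.
have Nr_gt0 : 0 < N%:R :> R by rewrite ltr0n.
have eps_lt1 : eps < 1 by lra.
have Wout_le := outlier_mass_le I N_gt0 eps_lt1 Dw.
set Nr : R := N%:R in Nr_gt0 few_outliers Wout_le *.
set K : R := #|I|%:R; set O : R := #|~: I|%:R in few_outliers Wout_le.
set Win := \sum_(m in I) w m; set Wout := \sum_(n in ~: I) w n in Wout_le.
have KO : K + O = Nr by rewrite /K /O -natrD cardsC card_ord.
have WinWout : Win + Wout = 1 by rewrite -w1 (big_setC I).
have scale_gt0 : 0 < (1 - eps) * Nr by rewrite mulr_gt0 // subr_gt0; lra.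
have Win_mass : K - eps * Nr <= Win * ((1 - eps) * Nr).
  by rewrite (_ : Win = 1 - Wout) ?mulrBl ?mul1r; lra.
have gap_gt0 : 0 < (1 - 2 * eps) * Nr by rewrite mulr_gt0 //; lra.
have Win_gt0 : 0 < Win by rewrite -(pmulr_lgt0 _ scale_gt0); lra.
have K_gt0 : 0 < K by have := mulr_ge0 eps_ge0 (ltW Nr_gt0); lra.
split; first by rewrite -mulr_suml divff // gt_eqF.
move=> n nI; have [_ w_le] := Dw.2 n (finset.in_setT n).
rewrite cardsT card_ord -/Nr ler_pdivlMr // in w_le.
split; first by rewrite divr_ge0 ?w_ge0 ?ltW.
have -> : 1 / ((1 - eps / (1 - eps)) * K) = (1 - eps) / ((1 - 2 * eps) * K).
  by field; rewrite ?gt_eqF //; lra.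
rewrite ler_pdivrMr // mulrAC ler_pdivlMr ?mulr_gt0 //; last by lra.
rewrite -(ler_pM2r scale_gt0).
have w_scaled_le : w n * ((1 - 2 * eps) * K) * ((1 - eps) * Nr) <= (1 - 2 * eps) * K.
  by rewrite mulrAC ler_piMl // mulr_ge0 ?ltW //; lra.
have gap_le : (1 - 2 * eps) * K <= (1 - eps) * (K - eps * Nr).
  have : 0 <= eps * (eps * Nr - O) by rewrite mulr_ge0 // subr_ge0.
  nra.
apply: le_trans w_scaled_le (le_trans gap_le _); rewrite -mulrA ler_wpM2l //; lra.
Qed.

End Simplex.

Lemma alpha_ge0 (R : realType) (eps : R) : 0 <= alpha eps.
Proof. exact: sqrtr_ge0. Qed.

Lemma alpha_lt1 (R : realType) (eps : R) : 0 <= eps -> eps < 1 / 3 -> alpha eps < 1.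
Proof.
move=> eps_ge0 eps_lt_third; rewrite /alpha -[X in _ < X]sqrtr1 ltr_sqrt //.
by rewrite ltr_pdivrMr; lra.
Qed.

Lemma weighted_mean_shift_le (R : realType) (I : finType) (J : {set I}) (w y : I -> R)
    (c m delta eps : R) :
  0 <= eps -> eps < 1 / 2 -> (forall i, 0 <= w i) -> \sum_i w i = 1 ->
  (1 - eps) * \sum_(i in ~: J) w i <= eps ->
  (\sum_(i in J) w i * y i) / (\sum_(i in J) w i) - m <= delta ->
  \sum_i w i * y i - m <= delta + alpha eps * Num.sqrt (\sum_i w i * (y i - c) ^+ 2).
Proof.
move=> eps_ge0 eps_lt_half w_ge0 w1 out_mass mean_le.
have /= between := between_groups_sqr_le w_ge0 J y c.
rewrite (big_setC J) in w1; rewrite [X in X - m](big_setC J).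
set W := \sum_(i in J) w i in w1 mean_le between *.
set W' := \sum_(i in ~: J) w i in w1 out_mass between *.
set A := \sum_(i in J) w i * y i in mean_le between *.
set B := \sum_(i in ~: J) w i * y i in between *.
set Q := \sum_i w i * (y i - c) ^+ 2 in between *.
rewrite w1 mul1r in between.
have W'_ge0 : 0 <= W' by exact: sumr_ge0.
have W_gt0 : 0 < W by nra.
have Q_ge0 : 0 <= Q by apply: sumr_ge0 => i _; rewrite mulr_ge0 ?sqr_ge0.
rewrite lerBlDr ler_pdivrMr // in mean_le.
set D := A + B - m - delta.
have bound_ge0 : 0 <= alpha eps * Num.sqrt Q by rewrite mulr_ge0 ?alpha_ge0 ?sqrtr_ge0.
have [D_le0|D_gt0] := lerP D 0; first by move: D_le0; rewrite /D; lra.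
have WD_le : W * D <= W * B - W' * A by rewrite (_ : W' = 1 - W) /D; lra.
have WD2_le : W * D ^+ 2 <= W' * Q.
  rewrite -(ler_pM2l W_gt0) mulrA -expr2 -exprMn [W * (W' * Q)]mulrA.
  have WD_ge0 : 0 <= W * D by rewrite mulr_ge0 ?ltW.
  by apply: le_trans between; rewrite ler_pXn2r ?nnegrE ?(le_trans WD_ge0 WD_le).
(* [W' / W <= eps / (1 - 2 eps)] is the outlier mass bound, as [W = 1 - W'] *)
have D2_le : D ^+ 2 <= eps / (1 - 2 * eps) * Q.
  rewrite mulrAC ler_pdivlMr; last by lra.
  rewrite -(ler_pM2l W_gt0); apply: le_trans (_ : W' * Q * (1 - 2 * eps) <= _).
    by rewrite mulrA ler_wpM2r //; lra.
  have : W' * (1 - 2 * eps) <= eps * W by rewrite (_ : W = 1 - W'); lra.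
  nra.
suff : D <= alpha eps * Num.sqrt Q by rewrite /D; lra.
rewrite (le_trans (ler_norm D)) // -sqrtr_sqr /alpha -sqrtrM; last by rewrite divr_ge0 //; lra.
by rewrite ler_sqrt // mulr_ge0 // divr_ge0 //; lra.
Qed.

Unset Implicit Arguments.

Theorem mainTheorem9 (R : realType) (N p : nat) (eps : R)
  (g : 'I_N -> 'cV[R]_p) (Iin : {set 'I_N}) (mu_g : 'cV[R]_p)
  (Sigma_g : 'M[R]_p) (delta_mu delta_Sigma : R) :
  (1 <= N)%N -> (1 <= p)%N -> 0 <= eps -> eps < 1 / 2 ->
  inlier_stable eps g Iin mu_g Sigma_g delta_mu delta_Sigma ->
  (forall (muhat : 'cV[R]_p) (w : 'I_N -> R), in_Delta [set: 'I_N] eps w ->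
     norm2 (\sum_(n < N) w n *: g n - mu_g)
       <= delta_mu + alpha eps * Num.sqrt (gamma g w muhat))
  /\ (eps < 1 / 3 -> alpha eps < 1).
Proof.
move=> N_gt0 p_gt0 eps_ge0 eps_lt_half [few_outliers _ _ _ stable].
split=> [muhat w Dw|]; last exact: alpha_lt1.
have [w_ge0 w1] := in_DeltaT_simplex Dw.
have eps_lt1 : eps < 1 by lra.
have out_mass := outlier_mass_eps N_gt0 eps_lt1 few_outliers Dw.
have Dw' := in_Delta_rescale N_gt0 eps_ge0 eps_lt_half few_outliers Dw.
have [mean_le _] := stable _ Dw'.
have [v v1 <-] := exists_unit_dot_norm2 (\sum_(n < N) w n *: g n - mu_g) p_gt0.
have proj_mean := le_trans (dot_unit_le_norm2 _ v1) mean_le.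
rewrite dot_centered_mean ?Dw'.1 // in proj_mean.
rewrite (_ : \sum_(i in Iin) _ = (\sum_(i in Iin) w i * dot v (g i)) / \sum_(i in Iin) w i)
  in proj_mean; last by rewrite mulr_suml; apply: eq_bigr => i _; rewrite mulrAC.
have var_le := projected_var_le_gamma g w muhat v1.
rewrite dotBr dot_sumr; under eq_bigr do rewrite dotZr.
apply: le_trans (weighted_mean_shift_le (dot v muhat) eps_ge0 eps_lt_half w_ge0 w1
  out_mass proj_mean) _.
rewrite lerD2l ler_wpM2l ?alpha_ge0 // ler_sqrt // (le_trans _ var_le) //.
by apply: sumr_ge0 => n _; rewrite mulr_ge0 ?sqr_ge0.
Qed.
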